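(* Let $P=(P_1,\dots,P_m):\mathbb{R}^n\to\mathbb{R}^m$ be a polynomial map with $P(0)=0$ and let $r\ge1$. The following are equivalent: (a) there exist $C,\varepsilon,\sigma>0$ such that $\mathscr{D}(\operatorname{grad}P_1(x),\dots,\operatorname{grad}P_m(x))\ge C|x|^{r-1}$ for all $x\in\mathscr{H}_{r}(P;\sigma)$ with $|x|<\varepsilon$; (b) there exist $q>0$, $\varepsilon>0$ such that $|P(x)|\cdot|y|+|(dP)^{*}(x)y|\cdot|x|\ge q|x|^{r}|y|$ for all $|x|<\varepsilon$ and all $y\in\mathbb{R}^m$.
   Context: $|\cdot|$ is the Euclidean norm; $(dP)^{*}(x)$ is the transpose of the Jacobian of $P$ at $x$. The horn-neighbourhood is $\mathscr{H}_{s}(F;\sigma)=\{x\in\mathbb{R}^{n}: |F(x)|<\sigma|x|^{s}\}$. For $v_1,\dots,v_m\in\mathbb{R}^n$, $\mathscr{D}(v_{1},\dots,v_{m})=\min_{i}\operatorname{dist}(v_{i},V_{i})$, where $V_{i}$ is the linear span of the $v_{j}$, $j\neq i$. *)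

From Stdlib Require Import Reals Lra Lia Arith.
Open Scope R_scope.

(* Vectors of R^n are represented as functions nat -> R; only the
   coordinates 0..n-1 are ever used. *)

Fixpoint sumR (n : nat) (f : nat -> R) : R :=
  match n with
  | O => 0
  | S k => sumR k f + f k
  end.

Definition norm (n : nat) (x : nat -> R) : R :=
  sqrt (sumR n (fun i => x i * x i)).

(* |t|^a for t >= 0, with the convention 0^a = 0 (only used with t = |x|). *)
Definition rpow (t a : R) : R :=
  if Rle_dec t 0 then 0 else Rpower t a.

Inductive is_poly (n : nat) : ((nat -> R) -> R) -> Prop :=
| poly_const (c : R) : is_poly n (fun _ => c)
| poly_var (i : nat) : (i < n)%nat -> is_poly n (fun x => x i)
| poly_add (p q : (nat -> R) -> R) :
    is_poly n p -> is_poly n q -> is_poly n (fun x => p x + q x)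
| poly_mul (p q : (nat -> R) -> R) :
    is_poly n p -> is_poly n q -> is_poly n (fun x => p x * q x).

Definition shift (x : nat -> R) (j : nat) (t : R) : nat -> R :=
  fun k => if Nat.eqb k j then x k + t else x k.

Definition is_grad (n : nat) (f : (nat -> R) -> R) (x : nat -> R)
  (g : nat -> R) : Prop :=
  forall j, (j < n)%nat -> derivable_pt_lim (fun t => f (shift x j t)) 0 (g j).

(* D(v_0,...,v_{m-1}) >= a, with v_i in R^n: for every i, the distance from
   v_i to V_i = span{v_j : j <> i} is >= a, i.e. |v_i - sum_{j<>i} c_j v_j| >= a
   for all coefficients c (this is the literal unfolding of min_i inf_c ... >= a). *)
Definition D_ge (n m : nat) (v : nat -> nat -> R) (a : R) : Prop :=
  forall i, (i < m)%nat -> forall c : nat -> R,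
    a <= norm n (fun k => v i k - sumR m (fun j => if Nat.eqb j i then 0 else c j * v j k)).

(* The equivalence is pointwise linear algebra.  The key fact is a duality
   between D and the adjoint (dP)^*(x) y = sum_i y_i grad P_i(x): for vectors
   v_1,...,v_m in R^n,
     D(v) >= a  implies  a |y| <= (m+1) |sum_i y_i v_i|   for all y, and
     a |y| <= |sum_i y_i v_i| for all y  implies  D(v) >= a.
   The first holds by factoring out the largest coordinate y_i (so that
   |y| <= (m+1)|y_i|), the second by testing with y = e_i - c.  Then
   (a) => (b) by splitting into x inside / outside the horn, and
   (b) => (a) since inside the horn the term |P(x)||y| is at most half of the
   right-hand side. *)

From Stdlib Require Import Reals Lra Lia.
Open Scope R_scope.

Lemma sumR_ext (n : nat) (f g : nat -> R) :
  (forall j, f j = g j) -> sumR n f = sumR n g.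
Proof. intros H; induction n; simpl; [reflexivity | rewrite IHn, H; reflexivity]. Qed.

Lemma sumR_plus (n : nat) (f g : nat -> R) :
  sumR n (fun j => f j + g j) = sumR n f + sumR n g.
Proof. induction n; simpl; [lra | rewrite IHn; lra]. Qed.

Lemma sumR_scal (n : nat) (a : R) (f : nat -> R) :
  sumR n (fun j => a * f j) = a * sumR n f.
Proof. induction n; simpl; [lra | rewrite IHn; lra]. Qed.

Lemma sumR_nonneg (n : nat) (f : nat -> R) : (forall j, 0 <= f j) -> 0 <= sumR n f.
Proof. intros H; induction n; simpl; [lra | specialize (H n); lra]. Qed.

Lemma sumR_delta (n i : nat) (a : R) :
  (i < n)%nat -> sumR n (fun j => if Nat.eqb j i then a else 0) = a.
Proof.
  intros Hi.
  assert (Hzero : forall k, (k <= i)%nat ->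
            sumR k (fun j => if Nat.eqb j i then a else 0) = 0).
  { induction k as [|k IH]; intros Hk; simpl; [reflexivity|].
    rewrite IH by lia. destruct (Nat.eqb_spec k i); [lia | lra]. }
  induction n as [|n IH]; [lia|]. simpl.
  destruct (Nat.eq_dec i n) as [<-|Hne].
  - rewrite Hzero, Nat.eqb_refl by lia. lra.
  - rewrite IH by lia. destruct (Nat.eqb_spec n i); [lia | lra].
Qed.

Lemma sumR_split (n i : nat) (f : nat -> R) :
  (i < n)%nat -> sumR n f = f i + sumR n (fun j => if Nat.eqb j i then 0 else f j).
Proof.
  intros Hi. rewrite <- (sumR_delta n i (f i) Hi), <- sumR_plus.
  apply sumR_ext. intros j. destruct (Nat.eqb_spec j i); subst; lra.
Qed.

Lemma norm_nonneg (n : nat) (x : nat -> R) : 0 <= norm n x.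
Proof. apply sqrt_pos. Qed.

Lemma norm_ext (n : nat) (f g : nat -> R) : (forall k, f k = g k) -> norm n f = norm n g.
Proof. intros H; unfold norm; f_equal; apply sumR_ext; intros; rewrite H; reflexivity. Qed.

Lemma norm_scal (n : nat) (a : R) (w : nat -> R) :
  norm n (fun k => a * w k) = Rabs a * norm n w.
Proof.
  unfold norm.
  rewrite (sumR_ext n _ (fun k => (a * a) * (w k * w k))) by (intros; ring).
  rewrite sumR_scal, sqrt_mult, <- sqrt_Rsqr_abs; [reflexivity | nra |].
  apply sumR_nonneg; intros; nra.
Qed.

Lemma norm_ge_coord (n : nat) (y : nat -> R) (i : nat) :
  (i < n)%nat -> Rabs (y i) <= norm n y.
Proof.
  intros Hi. unfold norm. rewrite (sumR_split n i _ Hi), <- sqrt_Rsqr_abs.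
  apply sqrt_le_1_alt. unfold Rsqr.
  assert (0 <= sumR n (fun j => if Nat.eqb j i then 0 else y j * y j)).
  { apply sumR_nonneg; intros j; destruct (Nat.eqb j i); nra. }
  lra.
Qed.

Lemma norm_le_max (n : nat) (y : nat -> R) (M : R) :
  0 <= M -> (forall j, (j < n)%nat -> Rabs (y j) <= M) -> norm n y <= (INR n + 1) * M.
Proof.
  intros HM H.
  assert (Hsum : sumR n (fun j => y j * y j) <= INR n * (M * M)).
  { induction n as [|n IH]; [simpl; lra|]. rewrite S_INR; simpl sumR.
    assert (Hyn : y n * y n <= M * M).
    { pose proof (Rsqr_abs (y n)) as Hsq. unfold Rsqr in Hsq. rewrite Hsq.
      specialize (H n ltac:(lia)). pose proof (Rabs_pos (y n)). nra. }
    assert (sumR n (fun j => y j * y j) <= INR n * (M * M)) by (apply IH; intros; apply H; lia).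
    lra. }
  pose proof (pos_INR n).
  unfold norm. rewrite <- (sqrt_Rsqr ((INR n + 1) * M)) by nra.
  apply sqrt_le_1_alt. unfold Rsqr. nra.
Qed.

Lemma exists_max_coord (n : nat) (y : nat -> R) :
  (0 < n)%nat -> exists i, (i < n)%nat /\ forall j, (j < n)%nat -> Rabs (y j) <= Rabs (y i).
Proof.
  induction n as [|n IH]; intros Hn; [lia|].
  destruct (Nat.eq_dec n 0) as [->|Hn0].
  - exists 0%nat; split; [lia|]. intros j Hj. replace j with 0%nat by lia. lra.
  - destruct IH as [i [Hi Hmax]]; [lia|].
    destruct (Rle_dec (Rabs (y n)) (Rabs (y i))).
    + exists i; split; [lia|]. intros j Hj.
      destruct (Nat.eq_dec j n); [subst; lra | apply Hmax; lia].
    + exists n; split; [lia|]. intros j Hj.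
      destruct (Nat.eq_dec j n); [subst; lra|]. specialize (Hmax j ltac:(lia)). lra.
Qed.

Lemma rpow_nonneg (t a : R) : 0 <= rpow t a.
Proof. unfold rpow. destruct (Rle_dec t 0); [lra | left; apply exp_pos]. Qed.

Lemma rpow_le0 (t a : R) : t <= 0 -> rpow t a = 0.
Proof. intros H; unfold rpow; destruct (Rle_dec t 0); [reflexivity | lra]. Qed.

Lemma rpow_pos_base (t a : R) : 0 < rpow t a -> 0 < t.
Proof. intros H. destruct (Rle_dec t 0) as [Ht|Ht]; [rewrite rpow_le0 in H; lra | lra]. Qed.

Lemma rpow_step (t a : R) : 0 <= t -> rpow t (a - 1) * t = rpow t a.
Proof.
  intros Ht. destruct (Req_dec t 0) as [->|Ht0].
  - rewrite !rpow_le0 by lra. ring.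
  - unfold rpow. destruct (Rle_dec t 0); [lra|].
    rewrite <- (Rpower_1 t) at 2 by lra. rewrite <- Rpower_plus. f_equal; ring.
Qed.

(* lincomb m v y = sum_i y_i v_i; with v_i = grad P_i(x) this is (dP)^*(x) y. *)
Definition lincomb (m : nat) (v : nat -> nat -> R) (y : nat -> R) : nat -> R :=
  fun k => sumR m (fun i => y i * v i k).

Definition residual (m i : nat) (v : nat -> nat -> R) (c : nat -> R) : nat -> R :=
  fun k => v i k - sumR m (fun j => if Nat.eqb j i then 0 else c j * v j k).

Lemma lincomb_as_residual (m i : nat) (v : nat -> nat -> R) (y : nat -> R) (k : nat) :
  (i < m)%nat -> y i <> 0 ->
  lincomb m v y k = y i * residual m i v (fun j => - y j / y i) k.
Proof.
  intros Hi Hyi. unfold lincomb, residual. rewrite (sumR_split m i _ Hi).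
  rewrite (sumR_ext m (fun j => if Nat.eqb j i then 0 else - y j / y i * v j k)
             (fun j => - / y i * (if Nat.eqb j i then 0 else y j * v j k))).
  - rewrite sumR_scal. field. exact Hyi.
  - intros j. destruct (Nat.eqb j i); [ring | field; exact Hyi].
Qed.

Lemma residual_as_lincomb (m i : nat) (v : nat -> nat -> R) (c : nat -> R) (k : nat) :
  (i < m)%nat ->
  residual m i v c k = lincomb m v (fun j => if Nat.eqb j i then 1 else - c j) k.
Proof.
  intros Hi. unfold lincomb, residual.
  rewrite (sumR_split m i (fun j => (if Nat.eqb j i then 1 else - c j) * v j k) Hi).
  rewrite Nat.eqb_refl.
  rewrite (sumR_ext m
    (fun j => if Nat.eqb j i then 0 else (if Nat.eqb j i then 1 else - c j) * v j k)
    (fun j => -1 * (if Nat.eqb j i then 0 else c j * v j k))).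
  - rewrite sumR_scal. ring.
  - intros j. destruct (Nat.eqb j i); ring.
Qed.

Lemma D_ge_lincomb_lower (n m : nat) (v : nat -> nat -> R) (a : R) (y : nat -> R) :
  D_ge n m v a -> 0 <= a -> a * norm m y <= (INR m + 1) * norm n (lincomb m v y).
Proof.
  intros HD Ha.
  pose proof (norm_nonneg n (lincomb m v y)) as HN. pose proof (pos_INR m).
  destruct (Nat.eq_dec m 0) as [->|Hm0].
  { unfold norm at 1. simpl. rewrite sqrt_0. nra. }
  destruct (exists_max_coord m y ltac:(lia)) as [i [Hi Hmax]].
  assert (Hy : norm m y <= (INR m + 1) * Rabs (y i))
    by (apply norm_le_max; [apply Rabs_pos | exact Hmax]).
  destruct (Req_dec (y i) 0) as [Hyi|Hyi].
  { rewrite Hyi, Rabs_R0 in Hy. pose proof (norm_nonneg m y). nra. }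
  assert (Hcomb : norm n (lincomb m v y)
                  = Rabs (y i) * norm n (residual m i v (fun j => - y j / y i))).
  { rewrite <- norm_scal. apply norm_ext. intros k. apply lincomb_as_residual; assumption. }
  assert (Hres : a <= norm n (residual m i v (fun j => - y j / y i)))
    by exact (HD i Hi (fun j => - y j / y i)).
  rewrite Hcomb. pose proof (Rabs_pos (y i)).
  apply Rle_trans with (a * ((INR m + 1) * Rabs (y i))); [apply Rmult_le_compat_l; lra |].
  rewrite <- Rmult_assoc, (Rmult_comm a), !Rmult_assoc.
  apply Rmult_le_compat_l; [lra|]. rewrite Rmult_comm. apply Rmult_le_compat_l; lra.
Qed.

Lemma lincomb_lower_D_ge (n m : nat) (v : nat -> nat -> R) (a : R) :
  (forall y, a * norm m y <= norm n (lincomb m v y)) -> D_ge n m v a.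
Proof.
  intros H i Hi c.
  set (y := fun j => if Nat.eqb j i then 1 else - c j).
  assert (Hy : 1 <= norm m y).
  { pose proof (norm_ge_coord m y i Hi) as Hc. unfold y in Hc at 1.
    rewrite Nat.eqb_refl, Rabs_R1 in Hc. exact Hc. }
  assert (Heq : norm n (residual m i v c) = norm n (lincomb m v y))
    by (apply norm_ext; intros k; apply residual_as_lincomb; exact Hi).
  specialize (H y). fold (residual m i v c). rewrite Heq.
  pose proof (norm_nonneg n (lincomb m v y)).
  destruct (Rle_dec 0 a); nra.
Qed.

Definition transversal_on_horn (n m : nat) (P : nat -> (nat -> R) -> R)
  (G : nat -> (nat -> R) -> nat -> R) (r : R) : Prop :=
  exists C eps sigma, 0 < C /\ 0 < eps /\ 0 < sigma /\
    forall x : nat -> R,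
      norm n x < eps ->
      norm m (fun i => P i x) < sigma * rpow (norm n x) r ->
      D_ge n m (fun i => G i x) (C * rpow (norm n x) (r - 1)).

Definition dual_estimate (n m : nat) (P : nat -> (nat -> R) -> R)
  (G : nat -> (nat -> R) -> nat -> R) (r : R) : Prop :=
  exists q eps, 0 < q /\ 0 < eps /\
    forall (x : nat -> R) (y : nat -> R),
      norm n x < eps ->
      norm m (fun i => P i x) * norm m y
        + norm n (fun k => sumR m (fun i => y i * G i x k)) * norm n x
      >= q * rpow (norm n x) r * norm m y.

(* (a) => (b) with q = min(C/(m+1), sigma): outside the horn |P(x)| alone
   suffices, inside it the duality lemma bounds the adjoint term. *)
Lemma transversal_dual_estimate (n m : nat) (P : nat -> (nat -> R) -> R)
  (G : nat -> (nat -> R) -> nat -> R) (r : R) :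
  transversal_on_horn n m P G r -> dual_estimate n m P G r.
Proof.
  intros [C [eps [sigma [HC [He [Hs HD]]]]]].
  pose proof (pos_INR m).
  set (q := Rmin (C / (INR m + 1)) sigma).
  assert (Hq : 0 < q) by (apply Rmin_glb_lt; [apply Rdiv_lt_0_compat |]; lra).
  assert (HqC : q * (INR m + 1) <= C).
  { apply Rle_trans with (C / (INR m + 1) * (INR m + 1)); [| right; field; lra].
    apply Rmult_le_compat_r; [lra | apply Rmin_l]. }
  assert (Hqs : q <= sigma) by apply Rmin_r.
  exists q, eps; split; [exact Hq|]; split; [exact He|].
  intros x y Hx.
  set (t := norm n x); set (p := norm m (fun i => P i x)); set (ny := norm m y).
  change (norm n (fun k => sumR m (fun i => y i * G i x k)))
    with (norm n (lincomb m (fun i => G i x) y)).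
  set (N := norm n (lincomb m (fun i => G i x) y)).
  assert (0 <= t) by apply norm_nonneg. assert (0 <= p) by apply norm_nonneg.
  assert (0 <= ny) by apply norm_nonneg. assert (0 <= N) by apply norm_nonneg.
  pose proof (rpow_nonneg t r). pose proof (rpow_nonneg t (r - 1)).
  destruct (Rle_dec (sigma * rpow t r) p) as [Hout|Hin].
  - assert (q * rpow t r * ny <= p * ny) by
      (apply Rmult_le_compat_r; [lra | apply Rle_trans with (sigma * rpow t r); nra]).
    assert (0 <= N * t) by nra.
    lra.
  - assert (Hlow : C * rpow t (r - 1) * ny <= (INR m + 1) * N)
      by (apply D_ge_lincomb_lower; [apply HD; [exact Hx | exact (Rnot_le_lt _ _ Hin)] | nra]).
    assert (HqN : q * rpow t (r - 1) * ny <= N).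
    { apply Rmult_le_reg_l with (INR m + 1); [lra|].
      apply Rle_trans with (C * rpow t (r - 1) * ny); [| exact Hlow].
      assert (0 <= rpow t (r - 1) * ny) by nra. nra. }
    rewrite <- (rpow_step t r) by assumption.
    assert (0 <= p * ny) by nra.
    assert (q * (rpow t (r - 1) * t) * ny <= N * t) by nra.
    lra.
Qed.

(* (b) => (a) with C = sigma = q/2: inside the horn |P(x)||y| < (q/2)|x|^r|y|,
   so |(dP)^*(x) y| >= (q/2)|x|^(r-1)|y|, which is D >= (q/2)|x|^(r-1). *)
Lemma dual_estimate_transversal (n m : nat) (P : nat -> (nat -> R) -> R)
  (G : nat -> (nat -> R) -> nat -> R) (r : R) :
  dual_estimate n m P G r -> transversal_on_horn n m P G r.
Proof.
  intros [q [eps [Hq [He Hest]]]].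
  exists (q / 2), eps, (q / 2); split; [lra|]; split; [exact He|]; split; [lra|].
  intros x Hx Hin.
  set (t := norm n x) in *; set (p := norm m (fun i => P i x)) in *.
  assert (0 <= p) by apply norm_nonneg.
  assert (Ht : 0 < t) by (apply (rpow_pos_base t r); nra).
  apply lincomb_lower_D_ge. intros y.
  specialize (Hest x y Hx). fold t p in Hest.
  change (norm n (fun k => sumR m (fun i => y i * G i x k)))
    with (norm n (lincomb m (fun i => G i x) y)) in Hest.
  set (N := norm n (lincomb m (fun i => G i x) y)) in *.
  set (ny := norm m y) in *.
  assert (0 <= ny) by apply norm_nonneg.
  pose proof (rpow_nonneg t (r - 1)).
  rewrite <- (rpow_step t r) in Hest, Hin by lra.
  apply Rmult_le_reg_r with t; [exact Ht|].
  nra.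
Qed.

Theorem mainTheorem5 (n m : nat) (P : nat -> (nat -> R) -> R)
  (G : nat -> (nat -> R) -> nat -> R) (r : R)
  (Hpoly : forall i, (i < m)%nat -> is_poly n (P i))
  (HP0 : forall i, (i < m)%nat -> P i (fun _ => 0) = 0)
  (HG : forall i, (i < m)%nat -> forall x, is_grad n (P i) x (G i x))
  (Hr : 1 <= r) :
  (exists C eps sigma, 0 < C /\ 0 < eps /\ 0 < sigma /\
     forall x : nat -> R,
       norm n x < eps ->
       norm m (fun i => P i x) < sigma * rpow (norm n x) r ->
       D_ge n m (fun i => G i x) (C * rpow (norm n x) (r - 1)))
  <->
  (exists q eps, 0 < q /\ 0 < eps /\
     forall (x : nat -> R) (y : nat -> R),
       norm n x < eps ->
       norm m (fun i => P i x) * norm m y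
         + norm n (fun k => sumR m (fun i => y i * G i x k)) * norm n x
       >= q * rpow (norm n x) r * norm m y).
Proof.
  change (transversal_on_horn n m P G r <-> dual_estimate n m P G r).
  split.
  - apply transversal_dual_estimate.
  - apply dual_estimate_transversal.
Qed.
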